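(* Let $k$ be algebraically closed of characteristic zero and $q\in k^\times$ not a root of unity. Suppose $a,b\in SL_n(k((t)))$ and there is $c\in GL_n(k((t)))$ with $b=c\,a\,\sigma_q(c)^{-1}$. Then there exists $c'\in SL_n(k((t)))$ with $b=c'a\sigma_q(c')^{-1}$. In other words, the natural map from $q$-conjugacy classes in $SL_n(k((t)))$ to $q$-conjugacy classes in $GL_n(k((t)))$ is injective.
   Context: $\sigma_q$ is the $k$-automorphism $a(t)\mapsto a(qt)$ of $k((t))$, applied entrywise to matrices. A $q$-conjugacy class in a $\sigma_q$-stable subgroup $G\subseteq GL_n(k((t)))$ is an orbit of $G$ acting on itself by $g\mapsto hg\sigma_q(h)^{-1}$. *)

From HB Require Import structures.
From mathcomp Require Import all_boot all_order all_algebra.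
From Stdlib Require Import ClassicalDescription FunctionalExtensionality IndefiniteDescription Classical.
Set Implicit Arguments. Unset Strict Implicit. Unset Printing Implicit Defensive.
Import GRing.Theory.
Local Open Scope ring_scope.

Section PSer.
Variable K : fieldType.

Record pser := Pser { pcoef : nat -> K }.

Lemma pser_ext (f g : pser) : (forall n, pcoef f n = pcoef g n) -> f = g.
Proof.
case: f g => f [g] /= H; congr Pser; exact: functional_extensionality.
Qed.

Definition pser_eqb (f g : pser) : bool :=
  if excluded_middle_informative (f = g) then true else false.
Lemma pser_eqP : Equality.axiom pser_eqb.
Proof.
move=> f g; rewrite /pser_eqb; case: excluded_middle_informative => H.
  exact: ReflectT. exact: ReflectF.
Qed.
HB.instance Definition _ := hasDecEq.Build pser pser_eqP.

Definition pser_find (P : pred pser) (_ : nat) : option pser :=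
  match excluded_middle_informative (exists x, P x) with
  | left h => Some (proj1_sig (constructive_indefinite_description _ h))
  | right _ => None
  end.
Lemma pser_find_correct P n x : pser_find P n = Some x -> P x.
Proof.
rewrite /pser_find; case: excluded_middle_informative => // h [<-].
by case: constructive_indefinite_description.
Qed.
Lemma pser_find_complete (P : pred pser) : (exists x, P x) -> exists n, pser_find P n.
Proof. by move=> h; exists 0%N; rewrite /pser_find; case: excluded_middle_informative. Qed.
Lemma pser_find_ext (P Q : pred pser) : P =1 Q -> pser_find P =1 pser_find Q.
Proof. by move=> /functional_extensionality -> . Qed.
HB.instance Definition _ :=
  hasChoice.Build pser pser_find_correct pser_find_complete pser_find_ext.

Definition pzero := Pser (fun _ => 0).
Definition popp f := Pser (fun n => - pcoef f n).
Definition padd f g := Pser (fun n => pcoef f n + pcoef g n).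
Lemma paddA : associative padd.
Proof. by move=> f g h; apply: pser_ext => n /=; rewrite addrA. Qed.
Lemma paddC : commutative padd.
Proof. by move=> f g; apply: pser_ext => n /=; rewrite addrC. Qed.
Lemma padd0 : left_id pzero padd.
Proof. by move=> f; apply: pser_ext => n /=; rewrite add0r. Qed.
Lemma paddN : left_inverse pzero popp padd.
Proof. by move=> f; apply: pser_ext => n /=; rewrite addNr. Qed.
HB.instance Definition _ := GRing.isZmodule.Build pser paddA paddC padd0 paddN.

Definition pmul f g :=
  Pser (fun n => \sum_(j < n.+1) pcoef f j * pcoef g (n - j)).
Definition pone := Pser (fun n => if n == 0%N then 1 else 0).

Definition ptrunc (n : nat) f : {poly K} := \poly_(i < n.+1) pcoef f i.

Lemma pmulE N n f g : (n <= N)%N ->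
  pcoef (pmul f g) n = (ptrunc N f * ptrunc N g)`_n.
Proof.
move=> le; rewrite coefM /=; apply: eq_bigr => i _.
have hi : (i < N.+1)%N by apply: leq_trans (ltn_ord i) _.
have hj : (n - i < N.+1)%N by rewrite ltnS (leq_trans (leq_subr _ _)).
by rewrite !coef_poly hi hj.
Qed.

Arguments pmulE N {n f g}.

Lemma coefM_le (P Q H : {poly K}) n : (forall i, (i <= n)%N -> P`_i = Q`_i) ->
  (P * H)`_n = (Q * H)`_n.
Proof.
by move=> e; rewrite !coefM; apply: eq_bigr => i _; rewrite e // -ltnS.
Qed.

Lemma pmulC : commutative pmul.
Proof. by move=> f g; apply: pser_ext => n; rewrite !(pmulE n) // mulrC. Qed.

Lemma pmulA : associative pmul.
Proof.
move=> f g h; apply: pser_ext => n.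
rewrite (pmulE n) // [pmul (pmul f g) h]pmulC (@pmulE n n h (pmul f g)) //.
rewrite (mulrC (ptrunc n f)).
rewrite (@coefM_le (ptrunc n (pmul g h)) (ptrunc n g * ptrunc n h)); last first.
  by move=> i le; rewrite coef_poly ifT ?ltnS // (pmulE n).
rewrite (mulrC (ptrunc n h)).
rewrite (@coefM_le (ptrunc n (pmul f g)) (ptrunc n f * ptrunc n g)); last first.
  by move=> i le; rewrite coef_poly ifT ?ltnS // (pmulE n).
by rewrite mulrC mulrA.
Qed.

Lemma ptrunc1 n : ptrunc n pone = 1.
Proof.
by apply/polyP => i; rewrite coef_poly coef1 /=; case: i => [|i] //; case: ifP.
Qed.

Lemma pmul1 : left_id pone pmul.
Proof.
move=> f; apply: pser_ext => n; rewrite (pmulE n) // ptrunc1 mul1r.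
by rewrite coef_poly ltnSn.
Qed.

Lemma ptruncD n f g : ptrunc n (padd f g) = ptrunc n f + ptrunc n g.
Proof. by apply/polyP => i; rewrite coefD !coef_poly; case: ifP; rewrite ?addr0. Qed.

Lemma pmulDl : left_distributive pmul padd.
Proof.
move=> f g h; apply: pser_ext => n.
rewrite [LHS](pmulE n) // ptruncD mulrDl coefD; congr (_ + _); by rewrite (pmulE n).
Qed.

Lemma pone_neq0 : pone != pzero.
Proof.
apply/eqP => /(congr1 (fun f => pcoef f 0%N)) /= /eqP; by rewrite oner_eq0.
Qed.

HB.instance Definition _ :=
  GRing.Zmodule_isComNzRing.Build pser pmulA pmulC pmul1 pmulDl pone_neq0.

Definition punit : {pred pser} := fun f =>
  if excluded_middle_informative (exists g, g * f = 1) then true else false.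
Definition pinv (f : pser) : pser :=
  match excluded_middle_informative (exists g, g * f = 1) with
  | left h => proj1_sig (constructive_indefinite_description _ h)
  | right _ => f
  end.
Lemma pmulV : {in punit, left_inverse 1 pinv *%R}.
Proof.
move=> f; rewrite /punit /pinv unfold_in; case: excluded_middle_informative => // h _.
by case: constructive_indefinite_description.
Qed.
Lemma punitPl (f g : pser) : g * f = 1 -> punit f.
Proof.
by move=> e; rewrite /punit; case: excluded_middle_informative => // [[]]; exists g.
Qed.
Lemma pinv_out : {in [predC punit], pinv =1 id}.
Proof.
move=> f; rewrite !inE /punit /pinv unfold_in /=; case: excluded_middle_informative => // .
Qed.
HB.instance Definition _ :=
  GRing.ComNzRing_hasMulInverse.Build pser pmulV punitPl pinv_out.

Lemma pser_neq0 (f : pser) : f != 0 -> exists i, pcoef f i != 0.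
Proof.
move=> nz; case: (classic (exists i, pcoef f i != 0)) => // H.
case/eqP: nz; apply: pser_ext => n /=.
by apply/eqP; apply/negPn/negP => h; apply: H; exists n.
Qed.

Lemma pser_integral : GRing.integral_domain_axiom pser.
Proof.
move=> f g fg0; apply/norP => -[/pser_neq0 hf /pser_neq0 hg].
case: (ex_minnP hf) => i fi mi; case: (ex_minnP hg) => j gj mj.
have : pcoef (f * g) (i + j) = 0 by rewrite fg0.
rewrite /= (bigD1 (@Ordinal (i + j).+1 i (leq_addr j i) : 'I_(i + j).+1)) //=.
rewrite big1 ?addr0 ?addKn => [/eqP|k nki]; first by rewrite mulf_eq0 (negbTE fi) (negbTE gj).
have [lt|ge] := ltnP k i.
  have : pcoef f k == 0 by apply/negPn/negP => h; have := mi _ h; rewrite leqNgt lt.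
  by move/eqP ->; rewrite mul0r.
have lt : (i < k)%N by rewrite ltn_neqAle ge andbT; apply: contra nki => /eqP ik; apply/eqP/val_inj.
have : pcoef g (i + j - k) == 0.
  apply/negPn/negP => h; have := mj _ h; rewrite leqNgt.
  by rewrite ltn_subLR ?ltn_add2r ?lt //; exact: (ltn_ord k).
by move/eqP ->; rewrite mulr0.
Qed.
HB.instance Definition _ := GRing.ComUnitRing_isIntegral.Build pser pser_integral.

(* sigma_q on power series: t |-> q t *)
Definition psig (q : K) (f : pser) : pser := Pser (fun n => q ^+ n * pcoef f n).

End PSer.

(* The field of formal Laurent series k((t)), realised as Frac(k[[t]]). *)
Definition laurent (K : fieldType) := {fraction pser K}.

Definition sigma_q (K : fieldType) (q : K) (x : laurent K) : laurent K :=
  let r := repr x in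
  (tofrac (psig q (r.1))) / (tofrac (psig q (r.2))).

From HB Require Import structures.
From mathcomp Require Import all_boot all_order all_algebra.
Set Implicit Arguments. Unset Strict Implicit. Unset Printing Implicit Defensive.
Import GRing.Theory.
Local Open Scope ring_scope.

(* Taking determinants gives sigma(det c) = det c.  The fixed points of
   sigma_q in k((t)) = Frac(k[[t]]) are the constants: for a fixed fraction
   f/g, with m the order of g and e = f_m / g_m, the series h = f - e g
   satisfies sigma(h) g = h sigma(g); comparing lowest coefficients gives
   q^ord(h) = q^m, so a nonzero h would have order m, although h_m = 0 by the
   choice of e.  Hence det c = e is a nonzero constant.  As k is algebraically
   closed, pick mu with mu^n = e^-1; then c' = mu c has determinant 1, and
   since mu is sigma-fixed, c' a sigma(c')^-1 = b. *)

Lemma fracE (R : idomainType) (x : {fraction R}) :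
  x = tofrac (repr x).1 / tofrac (repr x).2.
Proof.
have hd := denom_ratioP (repr x).
apply: (@mulIf _ (tofrac (repr x).2)); first by rewrite tofrac_eq0.
rewrite divfK ?tofrac_eq0 // -{1}[x]reprK /tofrac -!lock -[_ * _]FracField.pi_mul.
apply/eqmodP; rewrite /= FracField.equivfE /FracField.mulf.
by rewrite !numden_Ratio ?oner_neq0 ?mulr1 // mulrC.
Qed.

Lemma frac_decomp (R : idomainType) (x : {fraction R}) :
  exists f g, g != 0 /\ x = tofrac f / tofrac g.
Proof. by exists (repr x).1, (repr x).2; split; [exact: denom_ratioP | exact: fracE]. Qed.

Lemma subf_div (F : fieldType) (x1 y1 x2 y2 : F) : y1 != 0 -> y2 != 0 ->
  x1 / y1 - x2 / y2 = (x1 * y2 - x2 * y1) / (y1 * y2).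
Proof. by move=> nz1 nz2; rewrite -mulNr addf_div // mulNr. Qed.

Section PowerSeries.
Variable K : fieldType.

Lemma pcoefM (f g : pser K) n :
  pcoef (f * g) n = \sum_(j < n.+1) pcoef f j * pcoef g (n - j).
Proof. by []. Qed.

Lemma pcoefB (f g : pser K) n : pcoef (f - g) n = pcoef f n - pcoef g n.
Proof. by []. Qed.

Lemma pcoef_lead (u v : pser K) a b :
  (forall j, (j < a)%N -> pcoef u j = 0) -> (forall j, (j < b)%N -> pcoef v j = 0) ->
  pcoef (u * v) (a + b) = pcoef u a * pcoef v b.
Proof.
move=> hu hv; rewrite pcoefM.
rewrite (bigD1 (@Ordinal (a + b).+1 a (leq_addr b a) : 'I_(a + b).+1)) //=.
rewrite big1 ?addr0 ?addKn // => k nka.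
have [lt|ge] := ltnP k a; first by rewrite hu ?mul0r.
have lt : (a < k)%N.
  by rewrite ltn_neqAle ge andbT; apply: contra nka => /eqP ak; apply/eqP/val_inj.
by rewrite hv ?mulr0 // ltn_subLR ?ltn_add2r //; exact: (ltn_ord k).
Qed.

Lemma pser_lowest (f : pser K) : f != 0 ->
  exists a, pcoef f a != 0 /\ forall j, (j < a)%N -> pcoef f j = 0.
Proof.
move/pser_neq0 => nz; have [a fa ma] := ex_minnP nz; exists a; split=> // j lt.
by apply/eqP/negPn/negP => /ma; rewrite leqNgt lt.
Qed.

Definition pC (e : K) : pser K := Pser (fun n => if n == 0%N then e else 0).

Lemma pcoef_CM e (g : pser K) n : pcoef (pC e * g) n = e * pcoef g n.
Proof.
rewrite pcoefM big_ord_recl /= subn0 big1 ?addr0 // => i _.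
by rewrite /= mul0r.
Qed.

Lemma pC_is_zmod_morphism : zmod_morphism pC.
Proof. by move=> x y; apply: pser_ext => n /=; case: eqP; rewrite ?subr0. Qed.

Lemma pC_is_monoid_morphism : monoid_morphism pC.
Proof.
split; first exact: pser_ext.
by move=> x y; apply: pser_ext => n; rewrite pcoef_CM /=; case: eqP; rewrite ?mulr0.
Qed.

HB.instance Definition _ := GRing.isZmodMorphism.Build _ _ pC pC_is_zmod_morphism.
HB.instance Definition _ := GRing.isMonoidMorphism.Build _ _ pC pC_is_monoid_morphism.

Variable q : K.

Lemma psig_is_zmod_morphism : zmod_morphism (psig q).
Proof. by move=> f g; apply: pser_ext => n; rewrite /= mulrBr. Qed.

Lemma psig_is_monoid_morphism : monoid_morphism (psig q).
Proof.
split.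
  by apply: pser_ext => n /=; case: eqP => [->|]; rewrite ?expr0 ?mulr1 ?mulr0.
move=> f g; apply: pser_ext => n; rewrite /= mulr_sumr; apply: eq_bigr => j _.
by rewrite mulrACA -exprD subnKC // -ltnS.
Qed.

HB.instance Definition _ := GRing.isZmodMorphism.Build _ _ (psig q) psig_is_zmod_morphism.
HB.instance Definition _ := GRing.isMonoidMorphism.Build _ _ (psig q) psig_is_monoid_morphism.

Lemma psigC e : psig q (pC e) = pC e.
Proof. by apply: pser_ext => n /=; case: eqP => [->|_]; rewrite ?expr0 ?mul1r ?mulr0. Qed.

End PowerSeries.

Section SigmaMorphism.
Variables (K : fieldType) (q : K).
Hypothesis q_neq0 : q != 0.

Lemma psig_eq0 (f : pser K) : (psig q f == 0) = (f == 0).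
Proof.
apply/eqP/eqP => [h|->]; last exact: rmorph0.
apply: pser_ext => n; have := congr1 (fun g => pcoef g n) h => /= /eqP.
by rewrite mulf_eq0 expf_eq0 (negbTE q_neq0) andbF => /eqP.
Qed.

(* sigma_q acts on any fraction f/g, not only on the chosen representative. *)
Lemma sigma_frac (f g : pser K) : g != 0 ->
  sigma_q q (tofrac f / tofrac g) = tofrac (psig q f) / tofrac (psig q g).
Proof.
move=> hg; rewrite /sigma_q; set x := tofrac f / tofrac g.
have hr := denom_ratioP (repr x).
have cross : f * (repr x).2 = (repr x).1 * g.
  by apply/eqP; rewrite -tofrac_eq !tofracM -eqr_div ?tofrac_eq0 // -fracE.
apply/eqP; rewrite eqr_div ?tofrac_eq0 ?psig_eq0 // -!tofracM -!rmorphM cross.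
by rewrite mulrC.
Qed.

Lemma sigma_const (e : K) : sigma_q q (tofrac (pC e)) = tofrac (pC e).
Proof.
by rewrite -[tofrac _]divr1 -tofrac1 sigma_frac ?oner_neq0 // psigC rmorph1.
Qed.

Lemma sigma_is_zmod_morphism : zmod_morphism (sigma_q q).
Proof.
move=> x y; have [f [g [hg ->]]] := frac_decomp x.
have [f' [g' [hg' ->]]] := frac_decomp y.
have hs : forall h : pser K, h != 0 -> tofrac (psig q h) != 0.
  by move=> h nz; rewrite tofrac_eq0 psig_eq0.
rewrite subf_div ?tofrac_eq0 // -!tofracM -tofracB !sigma_frac ?mulf_neq0 //.
by rewrite subf_div ?hs // -!tofracM -tofracB rmorphB !rmorphM.
Qed.

Lemma sigma_is_monoid_morphism : monoid_morphism (sigma_q q).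
Proof.
split; first by rewrite -[1]divr1 -tofrac1 sigma_frac ?oner_neq0 // rmorph1 divr1.
move=> x y; have [f [g [hg ->]]] := frac_decomp x.
have [f' [g' [hg' ->]]] := frac_decomp y.
by rewrite mulf_div -!tofracM !sigma_frac ?mulf_neq0 // !rmorphM mulf_div.
Qed.

Definition sigma_rmorph : {rmorphism laurent K -> laurent K} :=
  HB.pack (sigma_q q)
    (GRing.isZmodMorphism.Build _ _ (sigma_q q) sigma_is_zmod_morphism)
    (GRing.isMonoidMorphism.Build _ _ (sigma_q q) sigma_is_monoid_morphism).

End SigmaMorphism.

Section FixedPoints.
Variables (K : fieldType) (q : K).
Hypothesis q_neq0 : q != 0.
Hypothesis q_not_root1 : forall m : nat, (0 < m)%N -> q ^+ m != 1.

Lemma expq_inj : injective (fun m : nat => q ^+ m).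
Proof.
suff lt_neq m p : (m < p)%N -> q ^+ m != q ^+ p.
  move=> m p /= eq_mp; have [lt|lt|//] := ltngtP m p.
    by move: (lt_neq m p lt); rewrite eq_mp eqxx.
  by move: (lt_neq p m lt); rewrite eq_mp eqxx.
move=> lt; rewrite -(subnKC (ltnW lt)) exprD -subr_eq0 -{1}[q ^+ m]mulr1 -mulrBr.
by rewrite mulf_eq0 expf_eq0 (negbTE q_neq0) andbF subr_eq0 eq_sym q_not_root1 ?subn_gt0.
Qed.

(* If h and g satisfy sigma(h) g = h sigma(g), comparing the lowest terms gives
   q^a = q^b for their t-adic orders a and b, hence a = b. *)
Lemma twisted_orders_eq (h g : pser K) a b :
  pcoef h a != 0 -> (forall j, (j < a)%N -> pcoef h j = 0) ->
  pcoef g b != 0 -> (forall j, (j < b)%N -> pcoef g j = 0) ->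
  psig q h * g = h * psig q g -> a = b.
Proof.
move=> ha hz gb gz twisted.
have hz' j : (j < a)%N -> pcoef (psig q h) j = 0 by move=> lt; rewrite /= hz ?mulr0.
have gz' j : (j < b)%N -> pcoef (psig q g) j = 0 by move=> lt; rewrite /= gz ?mulr0.
have := congr1 (fun f => pcoef f (a + b)) twisted.
rewrite (pcoef_lead hz' gz) (pcoef_lead hz gz') /= => lowest.
apply: expq_inj; apply: (mulIf (mulf_neq0 ha gb)).
by rewrite /= mulrA lowest mulrCA.
Qed.

Lemma sigma_fixed (x : laurent K) : sigma_q q x = x -> exists e, x = tofrac (pC e).
Proof.
have [f [g [hg ->]]] := frac_decomp x.
rewrite sigma_frac // => /eqP.
rewrite eqr_div ?tofrac_eq0 ?psig_eq0 // -!tofracM tofrac_eq => /eqP fixed.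
have [b [gb gz]] := pser_lowest hg.
pose e := pcoef f b / pcoef g b; exists e.
pose h := f - pC e * g.
have twisted : psig q h * g = h * psig q g.
  by rewrite rmorphB rmorphM /= psigC !mulrBl fixed mulrAC.
have hb : pcoef h b = 0 by rewrite pcoefB pcoef_CM divfK // subrr.
have -> : f = pC e * g.
  apply/eqP; rewrite -subr_eq0 -/h; apply/negPn/negP => /pser_lowest [a [ha hz]].
  by move: ha (twisted_orders_eq ha hz gb gz twisted) => /[swap] ->; rewrite hb eqxx.
by rewrite tofracM mulfK // tofrac_eq0.
Qed.

End FixedPoints.

Section QConjugation.
Variables (K : fieldType) (q : K).
Hypothesis q_neq0 : q != 0.

Lemma det_map_sigma n (A : 'M[laurent K]_n) :
  \det (map_mx (sigma_q q) A) = sigma_q q (\det A).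
Proof. exact: (det_map_mx (sigma_rmorph q_neq0)). Qed.

Lemma det_qconj_fixed n (a b c : 'M[laurent K]_n) :
  \det a = \det b -> \det a != 0 -> c \in unitmx ->
  b = c *m a *m invmx (map_mx (sigma_q q) c) -> sigma_q q (\det c) = \det c.
Proof.
move=> dab da cu eqb.
have dc : \det c != 0 by rewrite -unitfE -unitmxE.
have sdc : sigma_q q (\det c) != 0 by rewrite (fmorph_eq0 (sigma_rmorph q_neq0)).
have db : \det b = \det c * \det a / sigma_q q (\det c).
  by rewrite eqb !det_mulmx det_inv det_map_sigma.
apply: (mulIf da).
by rewrite -(divfK sdc (\det c * \det a)) -db -dab mulrC.
Qed.

Lemma qconj_scale n (lam : laurent K) (a c : 'M[laurent K]_n) :
  lam != 0 -> sigma_q q lam = lam -> c \in unitmx ->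
  (lam *: c) *m a *m invmx (map_mx (sigma_q q) (lam *: c)) =
  c *m a *m invmx (map_mx (sigma_q q) c).
Proof.
move=> lnz slam cu.
have -> : map_mx (sigma_q q) (lam *: c) = lam *: map_mx (sigma_q q) c.
  by rewrite (map_mxZ (sigma_rmorph q_neq0)) /= slam.
rewrite invmxZ; last by rewrite unitmxE detZ det_map_sigma unitrM unitrX ?unitfE //
  (fmorph_eq0 (sigma_rmorph q_neq0)) -unitfE -unitmxE.
by rewrite -!scalemxAl -scalemxAr scalerA mulfV // scale1r.
Qed.

End QConjugation.

Lemma closed_root (F : closedFieldType) (m : nat) (x : F) : (0 < m)%N ->
  exists y, y ^+ m = x.
Proof.
case: m => // m _.
have [y hy] := @solve_monicpoly F m.+1 (fun i => if i == 0%N then x else 0) isT.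
exists y; rewrite hy big_ord_recl big1 /= ?expr0 ?mulr1 ?addr0 // => i _.
by rewrite mul0r.
Qed.

Theorem mainTheorem3 (k : closedFieldType) (char0 : [pchar k] =i pred0)
    (q : k) (q_neq0 : q != 0) (q_not_root1 : forall m : nat, (0 < m)%N -> q ^+ m != 1)
    (n : nat) (a b c : 'M[laurent k]_n) :
  \det a = 1 -> \det b = 1 -> c \in unitmx ->
  b = c *m a *m invmx (map_mx (sigma_q q) c) ->
  exists c' : 'M[laurent k]_n,
    \det c' = 1 /\ b = c' *m a *m invmx (map_mx (sigma_q q) c').
Proof.
case: n a b c => [|n] a b c da db cu qconj.
  by exists c; rewrite det_mx00.
have dc : \det c != 0 by rewrite -unitfE -unitmxE.
have fixed : sigma_q q (\det c) = \det c.
  by apply: (det_qconj_fixed q_neq0 _ _ cu qconj); rewrite ?da ?db ?oner_neq0.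
have [e de] := sigma_fixed q_neq0 q_not_root1 fixed.
have enz : e != 0 by apply: contra dc; rewrite de => /eqP ->; rewrite !rmorph0.
have [mu hmu] := closed_root e^-1 (ltn0Sn n).
pose lam := tofrac (pC mu).
have lnz : lam != 0.
  rewrite tofrac_eq0 fmorph_eq0; apply: contra_neq (invr_neq0 enz) => mu0.
  by rewrite -hmu mu0 expr0n.
exists (lam *: c); split.
  by rewrite detZ de -!rmorphXn -!rmorphM hmu mulVf // !rmorph1.
by rewrite qconj qconj_scale ?sigma_const.
Qed.
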